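(* Let $W$ be a $\mathbb Z/2$-graded vector space, $\nu\in\mathbb Z/2$, and $\{-,-\}:W\otimes W\to W$ a bilinear operation of degree $\nu$ satisfying $\{u,v\}=-(-1)^{(|u|+\nu)(|v|+\nu)}\{v,u\}$. Suppose there is a trilinear operation $\alpha(u|v,w)$ of degree $0$ satisfying $\alpha(u|v,w)=(-1)^{(|v|+\nu)(|w|+\nu)}\alpha(u|w,v)$, such that for all homogeneous $u,v,w$, $$\{\{u,v\},w\}=\alpha(u|v,w)-(-1)^{(|u|+\nu)(|v|+\nu)}\alpha(v|u,w).$$ Then $\{-,-\}$ is a graded Lie bracket, i.e. $\{u,\{v,w\}\}-(-1)^{(|u|+\nu)(|v|+\nu)}\{v,\{u,w\}\}=\{\{u,v\},w\}$ for all homogeneous $u,v,w$.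
   Context: $|u|\in\mathbb Z/2$ denotes the parity of a homogeneous element; an operation of degree $\nu$ shifts parity by $\nu$. *)

From mathcomp Require Import all_boot all_algebra.
Set Implicit Arguments. Unset Strict Implicit. Unset Printing Implicit Defensive.
Import GRing.Theory.
Local Open Scope ring_scope.

(* A Z/2-grading of the K-vector space W: Wp false = W_0, Wp true = W_1,
   two subspaces with W = W_0 (+) W_1 (direct sum).  Parities live in bool
   (= Z/2), with addition xorb (+). *)
Definition Z2graded (K : fieldType) (W : lmodType K) (Wp : bool -> {pred W}) : Prop :=
  [/\ forall i, 0 \in Wp i,
      forall i (a : K) (u v : W), u \in Wp i -> v \in Wp i -> a *: u + v \in Wp i,
      forall w : W, exists w0 w1, [/\ w0 \in Wp false, w1 \in Wp true & w = w0 + w1]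
    & forall w : W, w \in Wp false -> w \in Wp true -> w = 0].

Definition sgn (K : fieldType) (a b : bool) : K := (-1) ^+ (a && b).

Definition bilinear_op (K : fieldType) (W : lmodType K) (f : W -> W -> W) : Prop :=
  (forall u (a : K) v v', f u (a *: v + v') = a *: f u v + f u v') /\
  (forall v (a : K) u u', f (a *: u + u') v = a *: f u v + f u' v).

Definition trilinear_op (K : fieldType) (W : lmodType K) (f : W -> W -> W -> W) : Prop :=
  (forall v w (a : K) u u', f (a *: u + u') v w = a *: f u v w + f u' v w) /\
  (forall u w (a : K) v v', f u (a *: v + v') w = a *: f u v w + f u v' w) /\
  (forall u v (a : K) w w', f u v (a *: w + w') = a *: f u v w + f u v w').

From mathcomp Require Import all_boot all_algebra.
Import GRing.Theory.
Local Open Scope ring_scope.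

(* Write p, q, r for the shifted parities |u|+nu, |v|+nu, |w|+nu and X, Y, Z
   for alpha(v|u,w), alpha(u|v,w), alpha(w|u,v).  Antisymmetry, then the
   hypothesis on {{-,-},-}, then the symmetry of alpha express each nested
   bracket in X, Y, Z:
     {u,{v,w}} = -(-1)^pq X + (-1)^(pr+qr) Z,
     {v,{u,w}} = -(-1)^pq Y + (-1)^(pq+pr+qr) Z,
   the second being the first with u and v swapped, rewritten by the symmetry
   alpha(w|v,u) = (-1)^pq Z.  So in {u,{v,w}} - (-1)^pq {v,{u,w}} the Z terms
   cancel and what remains is Y - (-1)^pq X = {{u,v},w}. *)

Lemma sgnC {K : fieldType} (a b : bool) : sgn K a b = sgn K b a.
Proof. by rewrite /sgn andbC. Qed.

Lemma sgnDr {K : fieldType} (a b c : bool) : sgn K a (b (+) c) = sgn K a b * sgn K a c.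
Proof.
by rewrite /sgn -exprD; case: a; case: b; case: c; rewrite ?expr0 ?expr1 ?sqrrN ?expr1n.
Qed.

Lemma sgnK {K : fieldType} (a b : bool) : sgn K a b * sgn K a b = 1.
Proof. by rewrite /sgn -exprD; case: (a && b); rewrite ?expr0 ?sqrrN ?expr1n. Qed.

Section GradedBracket.

Context {K : fieldType} {W : lmodType K} {Wp : bool -> {pred W}}.
Context {nu : bool} {br : W -> W -> W} {alpha : W -> W -> W -> W}.

Hypothesis br_homog : forall {a b : bool} {u v : W}, u \in Wp a -> v \in Wp b ->
  br u v \in Wp (a (+) b (+) nu).
Hypothesis br_anti : forall {a b : bool} {u v : W}, u \in Wp a -> v \in Wp b ->
  br u v = - (sgn K (a (+) nu) (b (+) nu) *: br v u).
Hypothesis alpha_sym : forall {a b c : bool} {u v w : W},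
  u \in Wp a -> v \in Wp b -> w \in Wp c ->
  alpha u v w = sgn K (b (+) nu) (c (+) nu) *: alpha u w v.
Hypothesis br_brE : forall {a b c : bool} {u v w : W},
  u \in Wp a -> v \in Wp b -> w \in Wp c ->
  br (br u v) w = alpha u v w - sgn K (a (+) nu) (b (+) nu) *: alpha v u w.

Local Notation "a ^nu" := (a (+) nu) (at level 2, format "a ^nu").

Lemma br_br_right {a b c : bool} {u v w : W} :
  u \in Wp a -> v \in Wp b -> w \in Wp c ->
  br u (br v w) =
  - (sgn K a^nu b^nu *: alpha v u w) + (sgn K a^nu c^nu * sgn K b^nu c^nu) *: alpha w u v.
Proof.
move=> Hu Hv Hw.
rewrite (br_anti Hu (br_homog Hv Hw)) (br_brE Hv Hw Hu) -addbA addbACA.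
rewrite (alpha_sym Hv Hw Hu) (alpha_sym Hw Hv Hu).
rewrite scalerBr !scalerA opprB addrC.
congr (- (_ *: _) + _ *: _).
  by rewrite sgnDr (sgnC c^nu) -mulrA sgnK mulr1.
by rewrite sgnDr (sgnC b^nu a^nu) mulrC -!mulrA (mulrA (sgn K a^nu b^nu)) sgnK mul1r mulrC.
Qed.

Lemma graded_jacobi {a b c : bool} {u v w : W} :
  u \in Wp a -> v \in Wp b -> w \in Wp c ->
  br u (br v w) - sgn K a^nu b^nu *: br v (br u w) = br (br u v) w.
Proof.
move=> Hu Hv Hw.
rewrite (br_br_right Hu Hv Hw) (br_br_right Hv Hu Hw) (alpha_sym Hw Hv Hu).
rewrite (br_brE Hu Hv Hw) (sgnC b^nu a^nu) (mulrC (sgn K b^nu c^nu)).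
rewrite scalerDr scalerN !scalerA (sgnK a^nu b^nu) scale1r.
by rewrite mulrAC (sgnK a^nu b^nu) mul1r opprD opprK addrACA addrN addr0 addrC.
Qed.

End GradedBracket.

Theorem mainTheorem8 (K : fieldType) (W : lmodType K) (Wp : bool -> {pred W})
  (nu : bool) (br : W -> W -> W) (alpha : W -> W -> W -> W) :
  Z2graded Wp ->
  bilinear_op br ->
  (forall (a b : bool) (u v : W), u \in Wp a -> v \in Wp b ->
     br u v \in Wp (a (+) b (+) nu)) ->
  (forall (a b : bool) (u v : W), u \in Wp a -> v \in Wp b ->
     br u v = - (sgn K (a (+) nu) (b (+) nu) *: br v u)) ->
  trilinear_op alpha ->
  (forall (a b c : bool) (u v w : W), u \in Wp a -> v \in Wp b -> w \in Wp c ->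
     alpha u v w \in Wp (a (+) b (+) c)) ->
  (forall (a b c : bool) (u v w : W), u \in Wp a -> v \in Wp b -> w \in Wp c ->
     alpha u v w = sgn K (b (+) nu) (c (+) nu) *: alpha u w v) ->
  (forall (a b c : bool) (u v w : W), u \in Wp a -> v \in Wp b -> w \in Wp c ->
     br (br u v) w = alpha u v w - sgn K (a (+) nu) (b (+) nu) *: alpha v u w) ->
  forall (a b c : bool) (u v w : W), u \in Wp a -> v \in Wp b -> w \in Wp c ->
    br u (br v w) - sgn K (a (+) nu) (b (+) nu) *: br v (br u w) = br (br u v) w.
Proof.
move=> _ _ br_homog br_anti _ _ alpha_sym br_brE a b c u v w.
exact: (graded_jacobi br_homog br_anti alpha_sym br_brE).
Qed.
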